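(* Let $L$ be a latin square of order $n$ on the symbols $\{1,\dots,n\}$ that has no transversal, and let $S\subseteq S_n$ be the set of its rows, regarded as permutations (the row with entries $l_1,\dots,l_n$ in columns $1,\dots,n$ being the permutation $i\mapsto l_i$). Then $\mathrm{cr}(S)=n-2$.
   Context: $S_n$ is the symmetric group on $\{1,\dots,n\}$ with the Hamming distance: the distance between $g,h\in S_n$ is the number of points $i$ with $g(i)\ne h(i)$. The covering radius $\mathrm{cr}(P)$ of a nonempty $P\subseteq S_n$ is the smallest $r$ such that every permutation in $S_n$ is at distance at most $r$ from some element of $P$. A latin square of order $n$ is an $n\times n$ array in which each symbol occurs exactly once in each row and column; a transversal is a set of $n$ cells, one from each row and one from each column, no two containing the same symbol. *)

From mathcomp Require Import all_boot all_order all_fingroup.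
Set Implicit Arguments. Unset Strict Implicit. Unset Printing Implicit Defensive.

(* Points {1..n} are represented by 'I_n = {0..n-1}; S_n is 'S_n. *)

Definition hdist n (g h : 'S_n) : nat := #|[set i : 'I_n | g i != h i]|.

Definition covers n (P : {set 'S_n}) (r : nat) : Prop :=
  forall g : 'S_n, exists2 h, h \in P & hdist g h <= r.

Definition is_covering_radius n (P : {set 'S_n}) (r : nat) : Prop :=
  covers P r /\ forall r', covers P r' -> r <= r'.

(* A latin square of order n: L r c is the symbol in row r, column c. *)
Definition latin_square n (L : 'I_n -> 'I_n -> 'I_n) : Prop :=
  (forall r, injective (L r)) /\ (forall c, injective (fun r => L r c)).

(* A transversal: n cells, one in each row and one in each column (i.e. cells
   (r, sigma r) for a bijection sigma from rows to columns), with pairwise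
   distinct symbols. *)
Definition has_transversal n (L : 'I_n -> 'I_n -> 'I_n) : Prop :=
  exists sigma : 'S_n, injective (fun r => L r (sigma r)).

Definition rows_set n (L : 'I_n -> 'I_n -> 'I_n) : {set 'S_n} :=
  [set s : 'S_n | [exists r : 'I_n, [forall i : 'I_n, s i == L r i]]].

From mathcomp Require Import all_boot all_order all_fingroup.
From Stdlib Require Import Classical.
Set Implicit Arguments. Unset Strict Implicit. Unset Printing Implicit Defensive.

(* Upper bound (rows_cover): for a permutation g let row_at c be the row whose
   entry in column c is g c.  If row_at were injective, the cells (row_at c, c)
   would form a transversal; so two columns share a row, and that row agrees
   with g twice, i.e. lies at distance at most n - 2 from g.

   Lower bound (rows_cover_lower): every latin square has a choice of one cell
   per column, with pairwise distinct symbols, using each row at most twice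
   (near_transversal).  These symbols define a permutation agreeing with every
   row at most twice, hence at distance at least n - 2 from every row.
   near_transversal is proved by augmentation: a partial such choice (an
   admissible assignment of rows to columns) with a free column can be
   enlarged by one of two local moves (improve_free, improve_swap); when
   neither applies, double counting row capacities over the assigned columns
   (section Stuck) shows that no column is free. *)

Lemma sum_indicator (T : finType) (P : pred T) : \sum_x (P x : nat) = #|[set x | P x]|.
Proof.
by rewrite -sum1dep_card [RHS]big_mkcond /=; apply: eq_bigr => x _; case: (P x).
Qed.

(* An assignment a maps each column c to the row a c selected in it, or to
   None if c is still free. *)
Section Assignments.
Variable n : nat.
Implicit Types (a : 'I_n -> option 'I_n) (c r : 'I_n).

Definition load a r : nat := \sum_c (a c == Some r).
Definition assigned a : nat := \sum_c (a c != None).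
Definition update a c (x : option 'I_n) : 'I_n -> option 'I_n :=
  fun c' => if c' == c then x else a c'.

Lemma assignedE a : assigned a = #|[set c | a c != None]|.
Proof. exact: sum_indicator. Qed.

Lemma load_update a c x r :
  load (update a c x) r + (a c == Some r) = load a r + (x == Some r).
Proof.
rewrite /load (bigD1 c) //= [in RHS](bigD1 c) //= {1}/update eqxx.
rewrite (eq_bigr (fun c' => (a c' == Some r) : nat)); last first.
  by move=> c' /negbTE; rewrite /update => ->.
by rewrite addnC [(x == _) + _]addnC addnA.
Qed.

Lemma assigned_update a c x :
  assigned (update a c x) + (a c != None) = assigned a + (x != None).
Proof.
rewrite /assigned (bigD1 c) //= [in RHS](bigD1 c) //= {1}/update eqxx.
rewrite (eq_bigr (fun c' => (a c' != None) : nat)); last first.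
  by move=> c' /negbTE; rewrite /update => ->.
by rewrite addnC [(x != None) + _]addnC addnA.
Qed.

Lemma sum_load a : \sum_r load a r = assigned a.
Proof.
rewrite /load exchange_big; apply: eq_bigr => c _ /=.
case: (a c) => [r0|]; last by rewrite big1.
by rewrite (bigD1 r0) //= eqxx big1 // => r; rewrite (inj_eq Some_inj) eq_sym => /negbTE ->.
Qed.
End Assignments.

Section NearTransversal.
Variables (n : nat) (L : 'I_n -> 'I_n -> 'I_n).
Hypotheses (row_inj : forall r, injective (L r))
           (col_inj : forall c, injective (fun r => L r c)).
Implicit Types (a : 'I_n -> option 'I_n) (c r : 'I_n).

(* The symbol selected in column c (an arbitrary value if c is unassigned). *)
Definition chosen_symbol a c : 'I_n := if a c is Some r then L r c else c.

Definition used_symbols a : {set 'I_n} :=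
  chosen_symbol a @: [set c | a c != None].

Definition admissible a : Prop :=
  (forall r, load a r <= 2) /\
  (forall c1 c2 r1 r2, a c1 = Some r1 -> a c2 = Some r2 ->
     L r1 c1 = L r2 c2 -> c1 = c2).

Lemma used_symbolsP a c r : a c = Some r -> L r c \in used_symbols a.
Proof.
by move=> acr; apply/imsetP; exists c; rewrite ?inE /chosen_symbol acr.
Qed.

Lemma chosen_symbol_inj a :
  admissible a -> {in [set c | a c != None] &, injective (chosen_symbol a)}.
Proof.
move=> [_ distinct] c1 c2; rewrite !inE /chosen_symbol.
by case E1: (a c1) => [r1|] //; case E2: (a c2) => [r2|] // _ _; apply: distinct.
Qed.

Lemma card_used_symbols a : admissible a -> #|used_symbols a| = assigned a.
Proof. by move=> adm; rewrite assignedE card_in_imset //; apply: chosen_symbol_inj. Qed.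

Lemma admissible_update a c r :
  admissible a -> (forall r', load (update a c (Some r)) r' <= 2) ->
  (forall c' r', c' != c -> a c' = Some r' -> L r' c' != L r c) ->
  admissible (update a c (Some r)).
Proof.
move=> [_ distinct] loads fresh; split=> // c1 c2 r1 r2; rewrite /update.
case: (eqVneq c1 c) => [->|n1]; case: (eqVneq c2 c) => [->|n2] //.
- by move=> [<-] a2 e; move: (fresh _ _ n2 a2); rewrite e eqxx.
- by move=> a1 [<-] e; move: (fresh _ _ n1 a1); rewrite e eqxx.
- exact: distinct.
Qed.

Definition improvable a : Prop :=
  exists a', admissible a' /\ assigned a < assigned a'.

Lemma load_update_le2 a c r :
  admissible a -> load a r < 2 -> forall r', load (update a c (Some r)) r' <= 2.
Proof.
move=> [loads _] lr r'; rewrite -ltnS.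
have := load_update a c (Some r) r'; rewrite (inj_eq Some_inj) => upd_eq.
apply: leq_ltn_trans (leq_addr (a c == Some r') _) _; rewrite upd_eq.
by case: (eqVneq r r') => [<-|_]; rewrite ?addn1 ?addn0 ?ltnS.
Qed.

Lemma improve_free a c0 r :
  admissible a -> a c0 = None -> load a r < 2 -> L r c0 \notin used_symbols a ->
  improvable a.
Proof.
move=> adm ac0 lr fresh; exists (update a c0 (Some r)); split.
  apply: admissible_update => // [|c' r' _ ac']; first exact: load_update_le2.
  by apply: contraNneq fresh => <-; apply: used_symbolsP.
by have := assigned_update a c0 (Some r); rewrite ac0 addn0 addn1 => ->.
Qed.

(* Second move: an assigned column c' (row rho) switches to a row q of load < 2
   whose symbol in c' is unused, and the free column c0 takes over the freed
   symbol L rho c' through row p, provided p still has room after the switch. *)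
Lemma improve_swap a c0 c' rho q p :
  admissible a -> a c0 = None -> a c' = Some rho -> load a q < 2 ->
  L q c' \notin used_symbols a -> L p c0 = L rho c' ->
  (if p == q then load a q == 0 else load a p < 2) ->
  improvable a.
Proof.
move=> adm ac0 ac' lq fresh_q sym_p room_p.
have c0_neq : c0 != c' by apply/eqP => e; move: ac0; rewrite e ac'.
have p_neq : p != rho.
  by apply: contra_neq c0_neq => e; apply: (@row_inj rho); rewrite -{1}e sym_p.
set a1 := update a c' (Some q).
have adm1 : admissible a1.
  apply: admissible_update => // [|c2 r2 _ ac2]; first exact: load_update_le2.
  by apply: contraNneq fresh_q => <-; apply: used_symbolsP.
have a1c0 : a1 c0 = None by rewrite /a1 /update (negbTE c0_neq).
have assigned1 : assigned a1 = assigned a.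
  by apply/eqP; rewrite -(eqn_add2r (a c' != None)) assigned_update ac'.
have load1p : load a1 p < 2.
  have := load_update a c' (Some q) p; rewrite ac' !(inj_eq Some_inj) -/a1.
  rewrite eq_sym (negbTE p_neq) addn0 => ->.
  by move: room_p; case: (eqVneq p q) => [-> /eqP ->|_ lp]; rewrite ?addn0.
exists (update a1 c0 (Some p)); split; last first.
  by have := assigned_update a1 c0 (Some p); rewrite a1c0 assigned1 addn0 addn1 => ->.
apply: admissible_update => // [|c2 r2 _]; first exact: load_update_le2.
rewrite sym_p /a1 /update; case: (eqVneq c2 c') => [-> [<-]|c2_neq ac2].
  by apply: contraNneq fresh_q => ->; apply: used_symbolsP.
by apply: contra_neq c2_neq; apply: (proj2 adm _ _ _ _ ac2 ac').
Qed.

Lemma card_missing_in_column (X : {set 'I_n}) c : #|[set r | L r c \notin X]| = #|~: X|.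
Proof.
by rewrite -(card_preimset (~: X) (@col_inj c)); apply: eq_card => r; rewrite !inE.
Qed.

Lemma card_missing_in_row (X : {set 'I_n}) r : #|[set c | L r c \notin X]| = #|~: X|.
Proof.
by rewrite -(card_preimset (~: X) (@row_inj r)); apply: eq_card => c; rewrite !inE.
Qed.

(* A stuck assignment, where neither move applies at the free column c0, already
   assigns every column.  The proof double counts the weights alpha and beta
   below over the assigned columns. *)
Section Stuck.
Variables (a : 'I_n -> option 'I_n) (c0 : 'I_n).
Hypotheses (adm : admissible a) (free_c0 : a c0 = None).
Hypothesis stuck_free :
  forall c r, a c = None -> load a r < 2 -> L r c \in used_symbols a.
Hypothesis stuck_swap : forall c' rho q p,
  a c' = Some rho -> load a q < 2 -> L q c' \notin used_symbols a ->
  L p c0 = L rho c' -> (if p == q then load a q == 0 else load a p < 2) -> False.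

Local Notation S := (used_symbols a).
Local Notation assigned_cols := [set c | a c != None].
Let cap r := 2 - load a r.
Let capacity := \sum_r cap r.
Let missing := #|~: S|.
Let alpha c' := \sum_p (L p c0 == chosen_symbol a c') * cap p.
Let beta c' := \sum_q (L q c' \notin S) * cap q.

Lemma capacity_total : capacity + assigned a = 2 * n.
Proof.
rewrite -sum_load /capacity -big_split /= (eq_bigr (fun _ => 2)).
  by rewrite sum_nat_const card_ord mulnC.
by move=> r _; rewrite subnK //; case: adm.
Qed.

Lemma missing_total : missing + assigned a = n.
Proof. by rewrite -card_used_symbols // addnC cardsC card_ord. Qed.

Lemma count_chosen s :
  \sum_(c in assigned_cols) ((s == chosen_symbol a c) : nat) = (s \in S).
Proof.
case: (boolP (s \in S)) => [/imsetP [c1 c1_in ->]|s_out].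
  rewrite (bigD1 c1) //= eqxx big1 // => c /andP [c_in c_neq].
  case: eqP => // /(chosen_symbol_inj adm c1_in c_in) e.
  by rewrite e eqxx in c_neq.
rewrite big1 // => c c_in; case: eqP => // e.
by rewrite e (imset_f _ c_in) in s_out.
Qed.

(* Since no first move applies at c0, every row with room has its c0-symbol
   used, hence chosen in exactly one assigned column. *)
Lemma sum_alpha : \sum_(c in assigned_cols) alpha c = capacity.
Proof.
rewrite /alpha exchange_big; apply: eq_bigr => p _ /=.
rewrite -big_distrl /= count_chosen /cap.
case: (posnP (2 - load a p)) => [->|]; first by rewrite muln0.
by rewrite subn_gt0 => /(stuck_free free_c0) ->; rewrite mul1n.
Qed.

(* A row with room meets the unused symbols in [missing] columns, all of them
   assigned since no first move applies at any free column. *)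
Lemma sum_beta : \sum_(c in assigned_cols) beta c = missing * capacity.
Proof.
rewrite /beta exchange_big /capacity big_distrr; apply: eq_bigr => q _ /=.
rewrite -big_distrl /= /cap.
case: (posnP (2 - load a q)) => [->|]; first by rewrite !muln0.
rewrite subn_gt0 => lq; congr (_ * _).
rewrite /missing -(card_missing_in_row S q) -sum_indicator big_mkcond.
apply: eq_bigr => c _; rewrite inE.
by case: (boolP (a c != None)) => // /negPn /eqP ac; rewrite (stuck_free ac lq).
Qed.

Lemma alphaE c' rho p :
  a c' = Some rho -> L p c0 = L rho c' -> alpha c' = cap p.
Proof.
move=> ac' sym_p; rewrite /alpha /chosen_symbol ac' (bigD1 p) //= sym_p eqxx mul1n.
rewrite big1 ?addn0 // => p' p'_neq; case: eqP => [e|]; last by rewrite mul0n.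
by rewrite -sym_p in e; move/(@col_inj c0): e => e; rewrite e eqxx in p'_neq.
Qed.

(* Each of the [missing] rows with an unused symbol in c' has capacity <= 2. *)
Lemma beta_le c' : beta c' <= 2 * missing.
Proof.
rewrite /beta /missing -(card_missing_in_column S c') -sum_indicator big_distrr /=.
by apply: leq_sum => q _; rewrite mulnC leq_mul2r leq_subr orbT.
Qed.

(* The key local inequality: since no second move applies, a column whose
   alpha and beta are both positive has alpha = beta = 1. *)
Lemma column_bound c' : a c' != None -> missing * alpha c' + beta c' <= 2 * missing.
Proof.
case ac': (a c') => [rho|] // _.
pose p0 := invF (@col_inj c0) (L rho c').
have sym_p0 : L p0 c0 = L rho c' by rewrite /p0 (f_invF (@col_inj c0)).
rewrite (alphaE ac' sym_p0).
case: (posnP (cap p0)) => [->|cap_p0]; first by rewrite muln0 beta_le.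
have room_p0 : load a p0 < 2 by rewrite -subn_gt0.
case: (pickP (fun q => (L q c' \notin S) && (load a q < 2))) => [q /andP [q_out lq]|none].
  have p0q : p0 = q.
    case: (eqVneq p0 q) => // /negbTE p0_neq; exfalso.
    by apply: (stuck_swap ac' lq q_out sym_p0); rewrite p0_neq.
  have load_q : load a q = 1.
    have : load a q != 0.
      apply/negP => /eqP l0.
      by apply: (stuck_swap ac' lq q_out sym_p0); rewrite p0q eqxx l0.
    by move: lq; case: (load a q) => [|[|]].
  have betaE : beta c' = 1.
    rewrite /beta (bigD1 q) //= q_out /cap load_q big1 // => q' q'_neq.
    case: (boolP (L q' c' \notin S)) => q'_out; last by rewrite mul0n.
    case: (posnP (2 - load a q')) => [->|]; first by rewrite muln0.
    rewrite subn_gt0 => lq'; case: (stuck_swap ac' lq' q'_out sym_p0).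
    by rewrite p0q eq_sym (negbTE q'_neq) load_q.
  have missing_pos : 0 < missing by apply/card_gt0P; exists (L q c'); rewrite inE.
  by rewrite betaE p0q /cap load_q muln1 mul2n -addnn leq_add2l.
have -> : beta c' = 0.
  rewrite /beta big1 // => q _; case: (boolP (L q c' \notin S)) => // q_out.
  by move: (none q); rewrite q_out /= /cap => /negbT; rewrite -leqNgt -subn_eq0 => /eqP ->.
by rewrite addn0 mulnC leq_mul2r leq_subr orbT.
Qed.

(* Summing column_bound: 2 * missing * capacity <= 2 * missing * assigned, so
   either no symbol is missing or capacity = 2n - assigned <= assigned. *)
Lemma stuck_full : n <= assigned a.
Proof.
have double_count :
    missing * capacity + missing * capacity <= assigned a * (2 * missing).
  rewrite -{1}sum_alpha -sum_beta big_distrr -big_split /=.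
  rewrite assignedE -sum_nat_const; apply: leq_sum => c.
  by rewrite inE; apply: column_bound.
case: (posnP missing) => [m0|m_pos].
  by have := missing_total; rewrite m0 add0n => ->.
have cap_le : capacity <= assigned a.
  move: double_count; rewrite addnn -mul2n mulnA [assigned a * _]mulnC.
  by rewrite leq_pmul2l // muln_gt0 m_pos.
rewrite -(leq_pmul2l (isT : 0 < 2)) -capacity_total mul2n -addnn.
by rewrite leq_add2r.
Qed.
End Stuck.

Lemma improve a : admissible a -> assigned a < n -> improvable a.
Proof.
move=> adm lt_n; apply: NNPP => not_improvable.
have [c0 free_c0] : exists c0, a c0 = None.
  case: (pickP (fun c => a c == None)) => [c0 /eqP ac0|all_assigned]; first by exists c0.
  move: lt_n; rewrite assignedE (_ : [set c | a c != None] = setT) ?cardsT ?card_ord ?ltnn //.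
  by apply/setP => c; rewrite !inE all_assigned.
suff : n <= assigned a by rewrite leqNgt lt_n.
apply: (stuck_full adm free_c0).
- move=> c r ac lr; apply/negPn/negP => fresh.
  exact: not_improvable (improve_free adm ac lr fresh).
- move=> c' rho q p ac' lq fresh sym_p room_p.
  exact: not_improvable (improve_swap adm free_c0 ac' lq fresh sym_p room_p).
Qed.

Lemma near_transversal : exists a, admissible a /\ forall c, a c != None.
Proof.
have grow k : k <= n -> exists a, admissible a /\ k <= assigned a.
  elim: k => [_|k IH lt_k].
    by exists (fun=> None); split=> //; split=> // r; rewrite /load big1.
  have [a [adm le_k]] := IH (ltnW lt_k).
  case: (ltnP k (assigned a)) => [lt_a|le_a]; first by exists a.
  have [a' [adm' lt_a']] := improve adm (leq_ltn_trans le_a lt_k).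
  by exists a'; split=> //; apply: leq_trans lt_a'.
have [a [adm full]] := grow n (leqnn n); exists a; split=> // c.
have all_cols : [set c | a c != None] = setT.
  by apply/eqP; rewrite eqEcard subsetT cardsT card_ord -assignedE full.
by have := in_setT c; rewrite -all_cols inE.
Qed.
End NearTransversal.

Lemma hdistE n (g h : 'S_n) : hdist g h = n - #|[set i | g i == h i]|.
Proof.
rewrite /hdist -[X in X - _]card_ord -(cardsC [set i | g i == h i]) addKn.
by apply: eq_card => i; rewrite !inE.
Qed.

Lemma hdist_two_agreements n (g h : 'S_n) i j :
  i != j -> g i = h i -> g j = h j -> hdist g h <= n - 2.
Proof.
move=> ij gi gj; rewrite hdistE leq_sub2l //.
have sub : [set i; j] \subset [set k | g k == h k].
  by apply/subsetP => k; rewrite !inE => /orP [] /eqP ->; apply/eqP.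
by apply: leq_trans (subset_leq_card sub); rewrite cards2 ij.
Qed.

Section Rows.
Variables (n : nat) (L : 'I_n -> 'I_n -> 'I_n).
Hypothesis latin : latin_square L.

Definition row_perm r : 'S_n := perm (proj1 latin r).

Lemma row_permE r i : row_perm r i = L r i.
Proof. by rewrite permE. Qed.

Lemma row_perm_in r : row_perm r \in rows_set L.
Proof. by rewrite inE; apply/existsP; exists r; apply/forallP => i; rewrite row_permE. Qed.

Lemma rows_setP h : h \in rows_set L -> exists r, h = row_perm r.
Proof.
rewrite inE => /existsP [r /forallP agree]; exists r.
by apply/permP => i; rewrite row_permE; apply/eqP.
Qed.

(* If no transversal exists, every permutation g agrees with some row twice:
   otherwise the rows through the cells (c, g c) would form a transversal. *)
Lemma rows_cover : ~ has_transversal L -> covers (rows_set L) (n - 2).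
Proof.
move=> no_transversal g.
pose row_at c := invF (proj2 latin c) (g c).
have row_atE c : L (row_at c) c = g c by rewrite /row_at (f_invF (proj2 latin c)).
case: (boolP (injectiveb row_at)) => [/injectiveP row_inj|/injectivePn [c1 [c2 c12 e]]].
  exfalso; apply: no_transversal; pose sigma := perm row_inj.
  have sym_at r : L r (sigma^-1 r)%g = g (sigma^-1 r)%g.
    by rewrite -{1}(permKV sigma r) permE; apply: row_atE.
  by exists (sigma^-1)%g => r1 r2 /=; rewrite !sym_at => /perm_inj /perm_inj.
exists (row_perm (row_at c1)); first exact: row_perm_in.
apply: (hdist_two_agreements c12); rewrite row_permE.
  by rewrite row_atE.
by rewrite e row_atE.
Qed.

(* A near transversal gives a permutation agreeing with each row at most twice. *)
Lemma rows_cover_lower r' : covers (rows_set L) r' -> n - 2 <= r'.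
Proof.
move=> cover; have [row_inj col_inj] := latin.
have [a [adm full]] := near_transversal row_inj col_inj.
pose row_of c := odflt c (a c).
have aE c : a c = Some (row_of c) by move: (full c); rewrite /row_of; case: (a c).
pose g c := L (row_of c) c.
have g_inj : injective g by move=> c1 c2; apply: (proj2 adm _ _ _ _ (aE c1) (aE c2)).
have [h /rows_setP [r ->] dist] := cover (perm g_inj).
apply: leq_trans dist; rewrite hdistE leq_sub2l //.
have -> : [set i | perm g_inj i == row_perm r i] = [set c | a c == Some r].
  by apply/setP => c; rewrite !inE permE row_permE aE (inj_eq Some_inj) (inj_eq (@col_inj c)).
by rewrite -sum_indicator; apply: (proj1 adm r).
Qed.
End Rows.

Theorem theorem6p4 (n : nat) (L : 'I_n -> 'I_n -> 'I_n) :
  latin_square L -> ~ has_transversal L ->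
  is_covering_radius (rows_set L) (n - 2).
Proof.
move=> latin no_transversal; split; first exact: rows_cover.
exact: rows_cover_lower.
Qed.
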